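(* Let $\kappa<0$, $m>0$, and let $L_{\kappa,m}$ be as in the context. Suppose $\delta\in(0,1)$ and $0<\rho_1<\rho_2<\min\{R_{|\kappa|},2m\delta/3\}$. Then with $\beta=\sqrt{1-\delta^2}$ and $A=\sin_\kappa(\rho_2)/\rho_2$, \[\frac{L_{\kappa,m}(\rho_2)}{L_{\kappa,m}(\rho_1)}\ge\frac12\left[\left(\frac{\rho_2}{A\rho_1}\right)^{\beta m}-\left(\frac{\rho_2}{A\rho_1}\right)^{-\beta m}\right].\]
   Context: For $\kappa<0$: $\sin_\kappa(\rho)=\sinh(\sqrt{-\kappa}\rho)/\sqrt{-\kappa}$, $\cos_\kappa=(\sin_\kappa)'$, and $R_{|\kappa|}=\pi/(2\sqrt{|\kappa|})$. $L_{\kappa,m}$ is a solution of \[\sin_\kappa^2(\rho)L''(\rho)+\sin_\kappa(\rho)\cos_\kappa(\rho)L'(\rho)+(\sin_\kappa^2(\rho)-m^2)L(\rho)=0\] that is well defined (regular) at $\rho=0$ and positive on some interval $(0,\varepsilon)$. *)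

From Stdlib Require Import Reals.
From Coquelicot Require Import Coquelicot.
Open Scope R_scope.

Definition sin_k (k r : R) : R := sinh (sqrt (- k) * r) / sqrt (- k).
Definition cos_k (k r : R) : R := Derive (sin_k k) r.
Definition R_abs (k : R) : R := PI / (2 * sqrt (Rabs k)).

Definition solves_L_ode (k m : R) (L : R -> R) : Prop :=
  forall r, 0 < r ->
    ex_derive L r /\ ex_derive (Derive L) r /\
    (sin_k k r)^2 * Derive_n L 2 r + sin_k k r * cos_k k r * Derive L r
      + ((sin_k k r)^2 - m^2) * L r = 0.

Definition regular_at_0 (L : R -> R) : Prop :=
  exists l : R, filterlim L (at_right 0) (locally l).

Definition positive_near_0 (L : R -> R) : Prop :=
  exists eps, 0 < eps /\ forall r, 0 < r < eps -> 0 < L r.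

Definition is_L_km (k m : R) (L : R -> R) : Prop :=
  solves_L_ode k m L /\ regular_at_0 L /\ positive_near_0 L.

From Stdlib Require Import Reals Lra Classical.
From Coquelicot Require Import Coquelicot.
Open Scope R_scope.

(* Write a := sqrt (-k), b := beta * m and phi r := tanh (a r / 2) ^ b, so that
   sin_k * phi' = b * phi.  The weighted Wronskian W := phi * (sin_k * L' - b * L) satisfies
   W' = phi * L * (m^2 - sin_k^2 - b^2) / sin_k, and m^2 - sin_k^2 - b^2 = (m delta)^2 - sin_k^2
   is nonnegative up to rho2 because sinh t <= 3 t / 2 for t < PI / 2.  If W (r0) < 0 for
   some small r0, then L >= K / phi - c on (0, r0] with K > 0, contradicting the regularity
   of L at 0 since phi -> 0; so W >= 0 there.  A continuity argument then keeps both L > 0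
   and W >= 0 up to rho2, hence L / phi, whose derivative is W / (sin_k * phi^2), is
   nondecreasing and L rho2 / L rho1 >= (tanh (a rho2 / 2) / tanh (a rho1 / 2)) ^ b.
   Elementary bounds on tanh show the latter is at least (rho2 / (A rho1)) ^ b, which
   dominates the stated lower bound. *)

Lemma le_of_is_derive_nonneg (f df : R -> R) a b : a <= b ->
  (forall x, a <= x <= b -> is_derive f x (df x)) ->
  (forall x, a < x < b -> 0 <= df x) -> f a <= f b.
Proof.
  intros Hab Hd Hpos. destruct (Req_dec a b) as [<-|Hne]; [lra|].
  destruct (MVT_cor2 f df a b) as [c [Hc Hcab]]; [lra| |].
  - intros x Hx. apply is_derive_Reals, Hd, Hx.
  - specialize (Hpos c Hcab). nra.
Qed.

Lemma cosh_ge_1 x : 1 <= cosh x.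
Proof.
  unfold cosh. rewrite exp_Ropp. pose proof (exp_pos x) as He.
  assert (0 <= (exp x - 1) ^ 2 / exp x)
    by (apply Rdiv_le_0_compat; [apply pow2_ge_0 | exact He]).
  replace ((exp x + / exp x) / 2) with (1 + (exp x - 1) ^ 2 / exp x / 2)
    by (field; apply Rgt_not_eq, He).
  lra.
Qed.

Lemma sinh_pos x : 0 < x -> 0 < sinh x.
Proof. intros Hx. rewrite <- sinh_0. now apply sinh_lt. Qed.

Lemma sinh_le_mul_cosh x : 0 <= x -> sinh x <= x * cosh x.
Proof.
  intros Hx.
  enough (0 * cosh 0 - sinh 0 <= x * cosh x - sinh x) by (rewrite sinh_0 in *; lra).
  apply (le_of_is_derive_nonneg (fun y => y * cosh y - sinh y) (fun y => y * sinh y));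
    [exact Hx | |].
  - intros y _. unfold cosh, sinh. auto_derive; [easy | field].
  - intros y Hy. pose proof (sinh_pos y). nra.
Qed.

Lemma tanh_le x : 0 <= x -> tanh x <= x.
Proof.
  intros Hx. pose proof (cosh_ge_1 x). unfold tanh.
  apply Rle_div_l; [lra|]. now apply sinh_le_mul_cosh.
Qed.

Lemma le_sinh x : 0 <= x -> x <= sinh x.
Proof.
  intros Hx. enough (sinh 0 - 0 <= sinh x - x) by (rewrite sinh_0 in *; lra).
  apply (le_of_is_derive_nonneg (fun y => sinh y - y) (fun y => cosh y - 1)); [exact Hx | |].
  - intros y _. unfold cosh, sinh. auto_derive; [easy | field].
  - intros y _. pose proof (cosh_ge_1 y). lra.
Qed.

Lemma sinh_div_le u v : 0 < u <= v -> sinh u / u <= sinh v / v.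
Proof.
  intros Huv.
  apply (le_of_is_derive_nonneg (fun y => sinh y / y) (fun y => (y * cosh y - sinh y) / y ^ 2));
    [lra | |].
  - intros y Hy. unfold cosh, sinh. auto_derive; [lra | field; lra].
  - intros y Hy. apply Rdiv_le_0_compat; [|nra].
    pose proof (sinh_le_mul_cosh y). lra.
Qed.

Lemma exp_le_pade x : 0 <= x < 2 -> exp x <= (2 + x) / (2 - x).
Proof.
  intros Hx. apply Rle_div_r; [lra|].
  enough ((2 + 0) - (2 - 0) * exp 0 <= (2 + x) - (2 - x) * exp x) by (rewrite exp_0 in *; lra).
  apply (le_of_is_derive_nonneg (fun y => (2 + y) - (2 - y) * exp y)
                                (fun y => 1 - (1 - y) * exp y)); [lra | |].
  - intros y _. auto_derive; [easy | ring].
  - intros y _. pose proof (exp_ineq1_le (- y)) as Hle. pose proof (exp_pos y).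
    rewrite exp_Ropp in Hle. apply (Rmult_le_compat_r (exp y)) in Hle; [|lra].
    rewrite Rinv_l in Hle by lra. lra.
Qed.

Lemma PI2_lt_8_5 : PI / 2 < 8 / 5.
Proof.
  destruct (PI_2_3_7_ineq 1) as [_ H].
  simpl in H. unfold tg_alt, PI_2_3_7_tg, Ratan_seq in H. simpl in H. lra.
Qed.

Lemma sinh_8_5_le : sinh (8 / 5) <= 12 / 5.
Proof.
  assert (HE : exp (8 / 5) <= (11 / 9) ^ 8).
  { replace (exp (8 / 5)) with (exp (1 / 5) ^ 8).
    2: { rewrite <- Rpower_pow by apply exp_pos. unfold Rpower. rewrite ln_exp.
         f_equal. simpl. lra. }
    apply pow_incr. pose proof (exp_pos (1 / 5)). pose proof (exp_le_pade (1 / 5)). lra. }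
  pose proof (exp_pos (8 / 5)). unfold sinh. rewrite exp_Ropp.
  assert (/ (11 / 9) ^ 8 <= / exp (8 / 5)) by (apply Rinv_le_contravar; lra).
  lra.
Qed.

Lemma sinh_le_3_2_mul x : 0 < x < PI / 2 -> sinh x <= 3 / 2 * x.
Proof.
  intros Hx. pose proof PI2_lt_8_5.
  assert (sinh (8 / 5) / (8 / 5) <= 3 / 2) by (apply Rle_div_l; pose proof sinh_8_5_le; lra).
  assert (sinh x / x <= sinh (8 / 5) / (8 / 5)) by (apply sinh_div_le; lra).
  apply (Rle_div_l (sinh x)); lra.
Qed.

Lemma tanh_pos x : 0 < x -> 0 < tanh x.
Proof.
  intros Hx. apply Rdiv_lt_0_compat; [now apply sinh_pos|]. pose proof (cosh_ge_1 x). lra.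
Qed.

Lemma tanh_lt_1 x : tanh x < 1.
Proof.
  pose proof (cosh_ge_1 x). pose proof (exp_pos (- x)).
  unfold tanh. apply (Rdiv_lt_1 (sinh x)); [lra|]. unfold sinh, cosh in *. lra.
Qed.

Lemma sinh_double x : sinh (2 * x) = 2 * sinh x * cosh x.
Proof.
  unfold sinh, cosh. replace (2 * x) with (x + x) by ring.
  rewrite Ropp_plus_distr, !exp_plus. field.
Qed.

Lemma Rpower_div x y c : 0 < x -> 0 < y -> Rpower (x / y) c = Rpower x c / Rpower y c.
Proof.
  intros Hx Hy. unfold Rpower. rewrite ln_div by assumption.
  rewrite Rmult_minus_distr_l. unfold Rminus. now rewrite exp_plus, exp_Ropp.
Qed.

Lemma sin_k_pos k r : k < 0 -> 0 < r -> 0 < sin_k k r.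
Proof.
  intros Hk Hr. assert (0 < sqrt (- k)) by (apply sqrt_lt_R0; lra).
  apply Rdiv_lt_0_compat; [apply sinh_pos; nra | assumption].
Qed.

Lemma is_derive_sin_k k r : k < 0 -> is_derive (sin_k k) r (cosh (sqrt (- k) * r)).
Proof.
  intros Hk. assert (0 < sqrt (- k)) by (apply sqrt_lt_R0; lra).
  unfold sin_k, sinh, cosh. auto_derive; [lra | field; lra].
Qed.

Lemma cos_k_eq k r : k < 0 -> cos_k k r = cosh (sqrt (- k) * r).
Proof. intros Hk. apply is_derive_unique, is_derive_sin_k, Hk. Qed.

Lemma sin_k_le k r : k < 0 -> 0 < r < R_abs k -> sin_k k r <= 3 / 2 * r.
Proof.
  intros Hk Hr. set (a := sqrt (- k)). assert (Ha : 0 < a) by (apply sqrt_lt_R0; lra).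
  unfold R_abs in Hr. rewrite Rabs_left in Hr by lra. fold a in Hr.
  assert (a * r < PI / 2).
  { destruct Hr as [_ Hr]. apply Rlt_div_r in Hr; lra. }
  unfold sin_k. fold a. apply Rle_div_l; [lra|].
  pose proof (sinh_le_3_2_mul (a * r)). nra.
Qed.

Lemma sqr_add_sqr_sin_k_le k m delta r : k < 0 -> 0 < m -> 0 < delta < 1 ->
  0 < r < R_abs k -> r < 2 * m * delta / 3 ->
  (sqrt (1 - delta ^ 2) * m) ^ 2 + sin_k k r ^ 2 <= m ^ 2.
Proof.
  intros Hk Hm Hd Hr Hrm. pose proof (sin_k_pos k r Hk (proj1 Hr)).
  pose proof (sin_k_le k r Hk Hr).
  rewrite Rpow_mult_distr, pow2_sqrt by nra. nra.
Qed.

Definition tanh_half_pow (k b r : R) : R := Rpower (tanh (sqrt (- k) * r / 2)) b.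

Lemma tanh_half_pow_pos k b r : 0 < tanh_half_pow k b r.
Proof. apply exp_pos. Qed.

Lemma tanh_half_pow_le_1 k b r : k < 0 -> 0 <= b -> 0 < r -> tanh_half_pow k b r <= 1.
Proof.
  intros Hk Hb Hr. assert (0 < sqrt (- k)) by (apply sqrt_lt_R0; lra).
  pose proof (tanh_pos (sqrt (- k) * r / 2) ltac:(nra)).
  pose proof (tanh_lt_1 (sqrt (- k) * r / 2)).
  unfold tanh_half_pow. apply (Rle_trans _ (Rpower 1 b)); [apply Rle_Rpower_l; lra|].
  unfold Rpower. rewrite ln_1, Rmult_0_r, exp_0. lra.
Qed.

Lemma is_derive_tanh_half_pow k b r : k < 0 -> 0 < r ->
  is_derive (tanh_half_pow k b) r (b * tanh_half_pow k b r / sin_k k r).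
Proof.
  intros Hk Hr. set (a := sqrt (- k)). assert (Ha : 0 < a) by (apply sqrt_lt_R0; lra).
  assert (Ht := tanh_pos (a * r / 2)).
  unfold tanh_half_pow, Rpower, sin_k. fold a. unfold tanh, sinh, cosh in *.
  auto_derive.
  - pose proof (exp_pos (a * r / 2)). pose proof (exp_pos (- (a * r / 2))).
    split; [lra|]. split; [apply Ht; nra | easy].
  - unfold Rminus, Rdiv. set (x := a * r * / 2).
    replace (a * r) with (x + x) by (unfold x; field).
    assert (0 < x) by (unfold x; assert (0 < a * r) by nra; lra).
    assert (1 < exp x) by (rewrite <- exp_0; apply exp_increasing; assumption).
    rewrite Ropp_plus_distr, !exp_plus, !exp_Ropp. set (E := exp x) in *.
    set (P := exp (b * _)). field. assert (1 < E * E) by nra. repeat split; nra.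
Qed.

Lemma tanh_half_pow_small k b eta : k < 0 -> 0 < b -> 0 < eta ->
  exists d, 0 < d /\ forall r, 0 < r < d -> tanh_half_pow k b r < eta.
Proof.
  intros Hk Hb Heta. set (a := sqrt (- k)). assert (Ha : 0 < a) by (apply sqrt_lt_R0; lra).
  exists (2 / a * Rpower eta (/ b)). split.
  { apply Rmult_lt_0_compat; [apply Rdiv_lt_0_compat; lra | apply exp_pos]. }
  intros r Hr. assert (0 < a * r) by nra. unfold tanh_half_pow. fold a.
  rewrite <- (Rpower_1 eta) by assumption. replace 1 with (/ b * b) by (field; lra).
  rewrite <- Rpower_mult. apply Rlt_Rpower_l; [assumption|]. split; [apply tanh_pos; lra|].
  apply (Rle_lt_trans _ (a * r / 2)); [apply tanh_le; lra|].
  destruct Hr as [_ Hr]. apply (Rmult_lt_compat_l (a / 2)) in Hr; [|lra].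
  replace (a / 2 * (2 / a * Rpower eta (/ b))) with (Rpower eta (/ b)) in Hr by (field; lra).
  lra.
Qed.

Lemma tanh_ratio_ge u v : 0 < u -> 0 < v -> v ^ 2 / (sinh v * cosh v * u) <= tanh v / tanh u.
Proof.
  intros Hu Hv. pose proof (sinh_pos v Hv). pose proof (cosh_ge_1 v).
  pose proof (tanh_pos u Hu). pose proof (tanh_pos v Hv).
  pose proof (tanh_le u (Rlt_le _ _ Hu)). pose proof (le_sinh v (Rlt_le _ _ Hv)).
  assert (0 < sinh v * cosh v * u)
    by (apply Rmult_lt_0_compat; [apply Rmult_lt_0_compat|]; lra).
  apply (Rle_trans _ (tanh v / u)).
  - replace (tanh v / u) with (sinh v ^ 2 / (sinh v * cosh v * u))
      by (unfold tanh; field; lra).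
    apply Rmult_le_compat_r; [apply Rlt_le, Rinv_0_lt_compat; lra|]. apply pow_incr; lra.
  - apply Rmult_le_compat_l; [lra|]. apply Rinv_le_contravar; lra.
Qed.

Lemma tanh_half_pow_ratio_ge k b x y : k < 0 -> 0 <= b -> 0 < x -> 0 < y ->
  Rpower (y / (sin_k k y / y * x)) b <= tanh_half_pow k b y / tanh_half_pow k b x.
Proof.
  intros Hk Hb Hx Hy. set (a := sqrt (- k)). assert (Ha : 0 < a) by (apply sqrt_lt_R0; lra).
  set (u := a * x / 2). set (v := a * y / 2).
  assert (Hu : 0 < u) by (unfold u; nra). assert (Hv : 0 < v) by (unfold v; nra).
  pose proof (sinh_pos v Hv). pose proof (cosh_ge_1 v).
  assert (Hxy : y / (sin_k k y / y * x) = v ^ 2 / (sinh v * cosh v * u)).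
  { unfold sin_k. fold a. replace (a * y) with (2 * v) by (unfold v; field).
    rewrite sinh_double. unfold u, v in *. field. repeat split; lra. }
  unfold tanh_half_pow. fold a u v. rewrite <- Rpower_div by (apply tanh_pos; assumption).
  apply Rle_Rpower_l; [assumption|]. split.
  - apply Rdiv_lt_0_compat; [assumption|].
    apply Rmult_lt_0_compat; [apply Rdiv_lt_0_compat|]; [apply sin_k_pos| |]; assumption.
  - rewrite Hxy. apply tanh_ratio_ge; assumption.
Qed.

Lemma locally_pos_of_continuous (f : R -> R) z : continuous f z -> 0 < f z ->
  exists d, 0 < d /\ forall y, Rabs (y - z) < d -> 0 < f y.
Proof.
  intros Hc Hz.
  destruct (Hc _ (locally_open _ _ (open_gt 0) (fun _ H => H) _ Hz)) as [d Hd].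
  exists d. split; [apply cond_pos | exact Hd].
Qed.

Lemma pos_on_interval_of_pos_before (f : R -> R) a b : a <= b ->
  (forall x, a <= x <= b -> continuous f x) ->
  (forall y, a <= y <= b -> (forall z, a <= z < y -> 0 < f z) -> 0 < f y) ->
  forall y, a <= y <= b -> 0 < f y.
Proof.
  intros Hab Hc Hstep.
  set (E := fun x => a <= x <= b /\ forall y, a <= y <= x -> 0 < f y).
  assert (Ha : E a).
  { split; [lra|]. intros y Hy. replace y with a by lra. apply Hstep; [lra|]. intros z Hz; lra. }
  destruct (completeness E) as [s [Hub Hlub]].
  { exists b. intros x [Hx _]. lra. }
  { exists a. exact Ha. }
  assert (Has : a <= s) by now apply Hub.
  assert (Hsb : s <= b) by (apply Hlub; intros x [Hx _]; lra).
  assert (Hbelow : forall y, a <= y < s -> 0 < f y).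
  { intros y Hy. apply NNPP. intros Hfy. assert (s <= y); [|lra].
    apply Hlub. intros x [_ Hx]. apply Rnot_lt_le. intros Hyx. apply Hfy, Hx. lra. }
  assert (Hs : 0 < f s) by (apply Hstep; [lra | exact Hbelow]).
  assert (Hs_eq_b : s = b).
  { apply NNPP. intros Hne.
    destruct (locally_pos_of_continuous f s (Hc s ltac:(lra)) Hs) as [d [Hd Hball]].
    set (x := Rmin (s + d / 2) b).
    assert (Hx : s < x <= s + d / 2 /\ x <= b).
    { split; [split; [apply Rmin_glb_lt; lra | apply Rmin_l] | apply Rmin_r]. }
    assert (HEx : E x).
    { split; [lra|]. intros y Hy.
      destruct (Rlt_or_le y s); [apply Hbelow; lra|]. apply Hball.
      rewrite Rabs_right; lra. }
    pose proof (Hub x HEx). lra. }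
  intros y Hy. destruct (Req_dec y b) as [->|Hne]; [now rewrite <- Hs_eq_b|]. apply Hbelow. lra.
Qed.

Lemma regular_at_0_bounded (L : R -> R) : regular_at_0 L ->
  exists M d, 0 < d /\ forall r, 0 < r < d -> L r < M.
Proof.
  intros [l Hl].
  destruct (Hl _ (locally_open _ _ (open_lt (l + 1)) (fun _ H => H) l ltac:(lra)))
    as [d Hd].
  exists (l + 1), d. split; [apply cond_pos|]. intros r Hr. apply Hd; [|lra].
  change (Rabs (r - 0) < d). rewrite Rabs_right; lra.
Qed.

Section Comparison.

Variables (k m b rho : R) (L : R -> R).
Hypotheses (Hk : k < 0) (Hb : 0 < b) (HL : solves_L_ode k m L).
Hypothesis Hpotential : forall r, 0 < r <= rho -> b ^ 2 + sin_k k r ^ 2 <= m ^ 2.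

(* Equals sin_k * (phi * L' - phi' * L) for phi := tanh_half_pow k b. *)
Definition wronskian (r : R) : R :=
  tanh_half_pow k b r * (sin_k k r * Derive L r - b * L r).

Lemma is_derive_wronskian r : 0 < r ->
  is_derive wronskian r
    (tanh_half_pow k b r * L r * (m ^ 2 - sin_k k r ^ 2 - b ^ 2) / sin_k k r).
Proof.
  intros Hr. destruct (HL r Hr) as [HL1 [HL2 Hode]]. rewrite cos_k_eq in Hode by exact Hk.
  pose proof (sin_k_pos k r Hk Hr).
  pose proof (is_derive_tanh_half_pow k b r Hk Hr) as Hphi.
  pose proof (is_derive_sin_k k r Hk) as Hs.
  assert (HL'' : Derive_n L 2 r
    = - (sin_k k r * cosh (sqrt (- k) * r) * Derive L r + (sin_k k r ^ 2 - m ^ 2) * L r)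
      / sin_k k r ^ 2).
  { apply (Rmult_eq_reg_l (sin_k k r ^ 2)); [|apply pow_nonzero; lra].
    field_simplify; lra. }
  unfold wronskian. auto_derive.
  - repeat split; try assumption; eexists; eassumption.
  - change (Derive (fun x => tanh_half_pow k b x) r) with (Derive (tanh_half_pow k b) r).
    change (Derive (fun x => sin_k k x) r) with (Derive (sin_k k) r).
    change (Derive (fun x => Derive L x) r) with (Derive_n L 2 r).
    change (Derive (fun x => L x) r) with (Derive L r).
    rewrite (is_derive_unique _ _ _ Hphi), (is_derive_unique _ _ _ Hs), HL''.
    field. lra.
Qed.

Lemma wronskian_le x y : 0 < x <= y -> y <= rho -> (forall z, x < z < y -> 0 <= L z) ->
  wronskian x <= wronskian y.
Proof.
  intros Hxy Hy HLnn.
  apply (le_of_is_derive_nonneg wronskian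
    (fun z => tanh_half_pow k b z * L z * (m ^ 2 - sin_k k z ^ 2 - b ^ 2) / sin_k k z));
    [lra | intros z Hz; apply is_derive_wronskian; lra |].
  intros z Hz. pose proof (sin_k_pos k z Hk ltac:(lra)). pose proof (tanh_half_pow_pos k b z).
  pose proof (Hpotential z ltac:(lra)). pose proof (HLnn z Hz).
  apply Rdiv_le_0_compat; [|lra]. apply Rmult_le_pos; [apply Rmult_le_pos|]; lra.
Qed.

Lemma is_derive_div_tanh_half_pow r : 0 < r ->
  is_derive (fun x => L x / tanh_half_pow k b x) r
    (wronskian r / (sin_k k r * tanh_half_pow k b r ^ 2)).
Proof.
  intros Hr. pose proof (sin_k_pos k r Hk Hr). pose proof (tanh_half_pow_pos k b r).
  replace (wronskian r / _) with
    ((Derive L r * tanh_half_pow k b r - L r * (b * tanh_half_pow k b r / sin_k k r))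
     / tanh_half_pow k b r ^ 2) by (unfold wronskian; field; lra).
  apply is_derive_div;
    [apply Derive_correct, HL, Hr | apply is_derive_tanh_half_pow; assumption | lra].
Qed.

Lemma is_derive_inv_sqr_tanh_half_pow r : 0 < r ->
  is_derive (fun x => / tanh_half_pow k b x ^ 2) r
    (- (2 * b) / (sin_k k r * tanh_half_pow k b r ^ 2)).
Proof.
  intros Hr. pose proof (sin_k_pos k r Hk Hr). pose proof (tanh_half_pow_pos k b r).
  pose proof (is_derive_tanh_half_pow k b r Hk Hr) as Hphi.
  replace (- (2 * b) / _) with
    (- (INR 2 * (b * tanh_half_pow k b r / sin_k k r) * tanh_half_pow k b r ^ Nat.pred 2)
     / (tanh_half_pow k b r ^ 2) ^ 2) by (simpl; field; lra).
  apply is_derive_inv; [apply is_derive_pow, Hphi | apply pow_nonzero; lra].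
Qed.

Lemma L_blows_up_of_wronskian_neg r0 : 0 < r0 <= rho -> wronskian r0 < 0 ->
  (forall r, 0 < r <= r0 -> 0 < L r) ->
  exists K c, 0 < K /\ forall r, 0 < r <= r0 -> K / tanh_half_pow k b r - c <= L r.
Proof.
  intros Hr0 HW HLpos.
  set (K := - wronskian r0 / (2 * b)).
  set (H := fun x => K * / tanh_half_pow k b x ^ 2 - L x / tanh_half_pow k b x).
  exists K, (Rabs (H r0)). split; [unfold K; apply Rdiv_lt_0_compat; lra|].
  intros r Hr.
  assert (HHr : H r <= H r0).
  { apply (le_of_is_derive_nonneg H
      (fun x => (wronskian r0 - wronskian x) / (sin_k k x * tanh_half_pow k b x ^ 2)));
      [lra | |].
    - intros x Hx. pose proof (sin_k_pos k x Hk ltac:(lra)). pose proof (tanh_half_pow_pos k b x).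
      replace ((wronskian r0 - wronskian x) / _) with
        (K * (- (2 * b) / (sin_k k x * tanh_half_pow k b x ^ 2))
         - wronskian x / (sin_k k x * tanh_half_pow k b x ^ 2))
        by (unfold K; field; repeat split; try apply pow_nonzero; lra).
      apply (is_derive_minus (fun x => K * / tanh_half_pow k b x ^ 2)
                             (fun x => L x / tanh_half_pow k b x)).
      + apply is_derive_scal, is_derive_inv_sqr_tanh_half_pow. lra.
      + apply is_derive_div_tanh_half_pow. lra.
    - intros x Hx. pose proof (sin_k_pos k x Hk ltac:(lra)). pose proof (tanh_half_pow_pos k b x).
      apply Rdiv_le_0_compat; [|apply Rmult_lt_0_compat; [|apply pow_lt]; lra].
      enough (wronskian x <= wronskian r0) by lra.
      apply wronskian_le; [lra | lra | intros z Hz; left; apply HLpos; lra]. }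
  pose proof (Rle_abs (H r0)). pose proof (Rabs_pos (H r0)).
  set (h0 := H r0) in *. unfold H in HHr.
  pose proof (tanh_half_pow_pos k b r).
  pose proof (tanh_half_pow_le_1 k b r Hk (Rlt_le _ _ Hb) (proj1 Hr)).
  set (p := tanh_half_pow k b r) in *.
  enough (K / p - L r <= Rabs h0) by lra.
  replace (K / p - L r) with ((K * / p ^ 2 - L r / p) * p) by (field; lra).
  apply (Rle_trans _ (h0 * p)); [apply Rmult_le_compat_r; lra | nra].
Qed.

Lemma wronskian_nonneg_near_0 r0 : 0 < r0 <= rho -> regular_at_0 L ->
  (forall r, 0 < r <= r0 -> 0 < L r) -> 0 <= wronskian r0.
Proof.
  intros Hr0 Hreg HLpos. apply Rnot_lt_le. intros HW.
  destruct (L_blows_up_of_wronskian_neg r0 Hr0 HW HLpos) as [K [c [HK Hblow]]].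
  destruct (regular_at_0_bounded L Hreg) as [M [d [Hd HM]]].
  set (S := Rabs M + Rabs c + 1).
  assert (HS : 0 < S) by (unfold S; pose proof (Rabs_pos M); pose proof (Rabs_pos c); lra).
  destruct (tanh_half_pow_small k b (K / S) Hk Hb) as [d' [Hd' Hsmall]];
    [apply Rdiv_lt_0_compat; assumption|].
  set (r := Rmin r0 (Rmin d d') / 2).
  assert (Hr : 0 < r <= r0 /\ r < d /\ r < d').
  { assert (0 < Rmin r0 (Rmin d d')) by (repeat apply Rmin_glb_lt; lra).
    pose proof (Rmin_l r0 (Rmin d d')). pose proof (Rmin_r r0 (Rmin d d')).
    pose proof (Rmin_l d d'). pose proof (Rmin_r d d'). unfold r. lra. }
  pose proof (tanh_half_pow_pos k b r). pose proof (Hsmall r ltac:(lra)) as Hp.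
  assert (S < K / tanh_half_pow k b r).
  { apply Rlt_div_r; [lra|]. apply Rlt_div_r in Hp; [|lra]. lra. }
  pose proof (Hblow r ltac:(lra)). pose proof (HM r ltac:(lra)).
  pose proof (Rle_abs M). pose proof (Rle_abs c). unfold S in *. lra.
Qed.

Lemma L_pos_of_wronskian_nonneg r0 : 0 < r0 <= rho -> 0 <= wronskian r0 -> 0 < L r0 ->
  forall y, r0 <= y <= rho -> 0 < L y.
Proof.
  intros Hr0 HW HL0. apply pos_on_interval_of_pos_before; [lra | |].
  - intros x Hx. apply (ex_derive_continuous (V := R_NormedModule)), HL. lra.
  - intros y Hy Hbefore. destruct (Req_dec y r0) as [->|Hne]; [exact HL0|].
    apply (Rlt_le_trans _ (L r0)); [exact HL0|].
    apply (le_of_is_derive_nonneg L (Derive L));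
      [lra | intros x Hx; apply Derive_correct, HL; lra |].
    intros x Hx. pose proof (tanh_half_pow_pos k b x). pose proof (sin_k_pos k x Hk ltac:(lra)).
    pose proof (Hbefore x ltac:(lra)).
    assert (HWx : 0 <= wronskian x).
    { apply (Rle_trans _ _ _ HW), wronskian_le; [lra | lra |].
      intros z Hz. left. apply Hbefore. lra. }
    assert (0 <= sin_k k x * Derive L x - b * L x).
    { apply (Rmult_le_reg_l (tanh_half_pow k b x)); [lra|]. rewrite Rmult_0_r. exact HWx. }
    nra.
Qed.

Lemma L_div_tanh_half_pow_le x y : 0 < x <= y -> y <= rho -> 0 <= wronskian x ->
  (forall z, x <= z <= y -> 0 < L z) ->
  L x / tanh_half_pow k b x <= L y / tanh_half_pow k b y.
Proof.
  intros Hxy Hy HWx HLpos.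
  apply (le_of_is_derive_nonneg (fun z => L z / tanh_half_pow k b z)
    (fun z => wronskian z / (sin_k k z * tanh_half_pow k b z ^ 2)));
    [lra | intros z Hz; apply is_derive_div_tanh_half_pow; lra |].
  intros z Hz. pose proof (sin_k_pos k z Hk ltac:(lra)). pose proof (tanh_half_pow_pos k b z).
  apply Rdiv_le_0_compat; [|apply Rmult_lt_0_compat; [|apply pow_lt]; lra].
  apply (Rle_trans _ _ _ HWx), wronskian_le; [lra | lra |].
  intros w Hw. left. apply HLpos. lra.
Qed.

Lemma tanh_half_pow_ratio_le_L_ratio x y : regular_at_0 L -> positive_near_0 L ->
  0 < x < y -> y <= rho ->
  tanh_half_pow k b y / tanh_half_pow k b x <= L y / L x.
Proof.
  intros Hreg [eps [Heps Hpos]] Hxy Hy.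
  set (r0 := Rmin eps x / 2).
  assert (Hr0 : 0 < r0 < eps /\ r0 < x).
  { assert (0 < Rmin eps x) by (apply Rmin_glb_lt; lra).
    pose proof (Rmin_l eps x). pose proof (Rmin_r eps x). unfold r0. lra. }
  assert (HW0 : 0 <= wronskian r0).
  { apply wronskian_nonneg_near_0; [lra | exact Hreg |]. intros r Hr. apply Hpos. lra. }
  pose proof (L_pos_of_wronskian_nonneg r0 ltac:(lra) HW0 (Hpos r0 ltac:(lra))) as HLpos.
  assert (HWx : 0 <= wronskian x).
  { apply (Rle_trans _ _ _ HW0), wronskian_le; [lra | lra |].
    intros z Hz. left. apply HLpos. lra. }
  pose proof (L_div_tanh_half_pow_le x y ltac:(lra) Hy HWx (fun z Hz => HLpos z ltac:(lra))).
  pose proof (HLpos x ltac:(lra)). pose proof (HLpos y ltac:(lra)).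
  pose proof (tanh_half_pow_pos k b x). pose proof (tanh_half_pow_pos k b y).
  replace (tanh_half_pow k b y / tanh_half_pow k b x)
    with (L x / tanh_half_pow k b x * (tanh_half_pow k b y / L x)) by (field; lra).
  replace (L y / L x) with (L y / tanh_half_pow k b y * (tanh_half_pow k b y / L x))
    by (field; lra).
  apply Rmult_le_compat_r; [apply Rlt_le, Rdiv_lt_0_compat|]; assumption.
Qed.
End Comparison.

Theorem mainTheorem5 (k m delta rho1 rho2 : R) (L : R -> R) :
  k < 0 -> 0 < m -> is_L_km k m L ->
  0 < delta < 1 ->
  0 < rho1 -> rho1 < rho2 -> rho2 < Rmin (R_abs k) (2 * m * delta / 3) ->
  let beta := sqrt (1 - delta ^ 2) in
  let A := sin_k k rho2 / rho2 in
  L rho2 / L rho1 >=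
    / 2 * (Rpower (rho2 / (A * rho1)) (beta * m)
           - Rpower (rho2 / (A * rho1)) (- (beta * m))).
Proof.
  intros Hk Hm [Hode [Hreg Hpos]] Hdelta Hr1 Hr12 Hr2 beta A.
  apply Rmin_Rgt_l in Hr2 as [HR Hdm].
  assert (Hb : 0 < beta * m) by (apply Rmult_lt_0_compat; [apply sqrt_lt_R0; nra | lra]).
  assert (Hratio : tanh_half_pow k (beta * m) rho2 / tanh_half_pow k (beta * m) rho1
                   <= L rho2 / L rho1).
  { apply (tanh_half_pow_ratio_le_L_ratio k m (beta * m) rho2);
      try assumption; [| lra | lra].
    intros r Hr. apply (sqr_add_sqr_sin_k_le k m delta); lra. }
  pose proof (tanh_half_pow_ratio_ge k (beta * m) rho1 rho2 Hk ltac:(lra) Hr1 ltac:(lra))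
    as Hmodel.
  fold A in Hmodel.
  pose proof (exp_pos (beta * m * ln (rho2 / (A * rho1)))).
  pose proof (exp_pos (- (beta * m) * ln (rho2 / (A * rho1)))).
  unfold Rpower in *. apply Rle_ge. lra.
Qed.
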